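(* Assume $r_0>-\infty$ and $\mathbb E[(\min\{t_1^+,\dots,t_{2d}^+\})^d]<\infty$. For $\diamond\in\{\text{none},o\}$ and $|\xi|_1=1$, the radial limit $g^\diamond(\xi)=\lim_{t\nearrow1}g^\diamond(t\xi)$ extends both shape functions to all of $\mathcal U$. The resulting functions $g:\mathcal U\to[r_0,\infty]$ and $g^o:\mathcal U\to[r_0\wedge0,\infty]$ are both convex and lower semicontinuous.
   Context: Let $d\ge2$. The edge weights $\{t(e)\}$ on the undirected nearest-neighbor edges of $\mathbb Z^d$ are i.i.d. real, and $t_i$ are i.i.d. copies with $t_i^+=t_i\vee 0$. Set $r_0=\operatorname{ess\,inf}t(e)$, $\mathcal U=\{\xi\in\mathbb R^d:|\xi|_1\le1\}$, and $\operatorname{int}\mathcal U=\{|\xi|_1<1\}$. For paths $(x_0,\dots,x_n)$ with steps in $\mathcal R=\{\pm e_i\}$ (respectively in $\mathcal R^o=\mathcal R\cup\{0\}$, where zero steps have weight $0$), let $G_{0,(n),x}$ (respectively $G^o_{0,(n),x}$) be the minimal passage time over such $n$-step paths from $0$ to $x$. Let $\mathcal D_n$ (respectively $\mathcal D^o_n$) be the set of points reachable by such $n$-step paths. Under the hypotheses, there are deterministic continuous convex functions $g,g^o$ on $\operatorname{int}\mathcal U$ (the restricted path-length shape functions, written $g^\diamond$ with $g^{\text{none}}=g$) such that almost surely, for all $\xi$, all $\alpha>|\xi|_1$ and all $k_n\to\infty$ with $k_n/n\to\alpha$, $x_n\in\mathcal D_{k_n}$, $y_n\in\mathcal D^o_{k_n}$,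 $x_n/n\to\xi$, $y_n/n\to\xi$: $$n^{-1}G_{0,(k_n),x_n}\to\alpha g(\xi/\alpha)\quad\text{and}\quad n^{-1}G^o_{0,(k_n),y_n}\to\alpha g^o(\xi/\alpha).$$ *)

From HB Require Import structures.
From mathcomp Require Import all_boot all_order all_algebra.
From mathcomp Require Import all_classical all_reals all_analysis.
From mathcomp Require Import ess_sup_inf.
Set Implicit Arguments. Unset Strict Implicit. Unset Printing Implicit Defensive.
Import Order.TTheory GRing.Theory Num.Def Num.Theory.
Import numFieldNormedType.Exports.
Local Open Scope classical_set_scope.
Local Open Scope ring_scope.

Definition point (d : nat) := 'rV[int]_d.
Definition unitv (d : nat) (i : 'I_d) : point d := delta_mx 0 i.
(* The undirected nearest-neighbour edge {x, x + e_i} is encoded as (x, i). *)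
Definition edge (d : nat) := (point d * 'I_d)%type.

(* Steps: Some (i, true) = +e_i, Some (i, false) = -e_i, None = zero step. *)
Definition step (d : nat) := option ('I_d * bool).

Definition step_vec (d : nat) (s : step d) : point d :=
  match s with
  | None => 0
  | Some (i, true) => unitv i
  | Some (i, false) => - unitv i
  end.

Definition step_weight (R : realType) (d : nat) (t : edge d -> R)
    (x : point d) (s : step d) : R :=
  match s with
  | None => 0
  | Some (i, true) => t (x, i)
  | Some (i, false) => t (x - unitv i, i)
  end.

Fixpoint path_end (d : nat) (x : point d) (p : seq (step d)) : point d :=
  match p with
  | [::] => x
  | s :: p' => path_end (x + step_vec s) p'
  end.

Fixpoint path_weight (R : realType) (d : nat) (t : edge d -> R)
    (x : point d) (p : seq (step d)) : R :=
  match p with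
  | [::] => 0
  | s :: p' => step_weight t x s + path_weight t (x + step_vec s) p'
  end.

(* Admissible steps: lazy = false means steps in R = {+-e_i};
   lazy = true means steps in R^o = R u {0}. *)
Definition admissible (d : nat) (lazy : bool) (p : seq (step d)) : bool :=
  lazy || all (fun s => s != None) p.

(* D_n (lazy = false) and D^o_n (lazy = true): points reachable from 0
   by admissible n-step paths. *)
Definition reachable (d : nat) (lazy : bool) (n : nat) (x : point d) : Prop :=
  exists p : n.-tuple (step d), admissible lazy p /\ path_end 0 p = x.

(* G_{0,(n),x} (lazy = false) and G^o_{0,(n),x} (lazy = true):
   minimal passage time over admissible n-step paths from 0 to x
   (+oo if there is none). *)
Definition passage (R : realType) (d : nat) (lazy : bool) (t : edge d -> R)
    (n : nat) (x : point d) : \bar R :=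
  \big[Order.min/+oo%E]_(p : n.-tuple (step d) |
        admissible lazy p && (path_end 0 p == x)) (path_weight t 0 p)%:E.

Definition l1 (R : realType) (d : nat) (xi : 'rV[R]_d) : R :=
  \sum_(i < d) `|xi 0 i|.

Definition to_real (R : realType) (d : nat) (x : point d) : 'rV[R]_d :=
  map_mx (fun z : int => z%:~R) x.

Definition origin_edges (d : nat) : seq (edge d) :=
  [seq (0, i) | i <- enum 'I_d] ++ [seq (- unitv i, i) | i <- enum 'I_d].

Definition iid_weights (R : realType) (dT : measure_display)
    (T : measurableType dT) (P : probability T R) (d : nat)
    (t : edge d -> T -> R) : Prop :=
  (forall e, measurable_fun setT (t e)) /\
  (forall e e' (B : set R), measurable B ->
      P (t e @^-1` B) = P (t e' @^-1` B)) /\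
  (forall (s : seq (edge d)) (B : edge d -> set R), uniq s ->
      (forall e, measurable (B e)) ->
      P (\big[setI/setT]_(e <- s) (t e @^-1` B e)) =
      \prod_(e <- s) P (t e @^-1` B e))%E.

Definition shape_limit (R : realType) (dT : measure_display)
    (T : measurableType dT) (P : probability T R) (d : nat)
    (t : edge d -> T -> R) (lazy : bool) (g : 'rV[R]_d -> R) : Prop :=
  {ae P, forall w, forall (xi : 'rV[R]_d) (alpha : R) (k : nat -> nat)
      (x : nat -> point d),
      l1 xi < alpha ->
      k @ \oo --> \oo ->
      (fun n => (k n)%:R / n%:R : R) @ \oo --> alpha ->
      (forall n, reachable lazy (k n) (x n)) ->
      (fun n => n%:R^-1 *: to_real R (x n)) @ \oo --> xi ->
      (fun n => (n%:R^-1)%:E * passage lazy (fun e => t e w) (k n) (x n))%E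
        @ \oo --> (alpha * g (alpha^-1 *: xi))%:E}.

Definition Uball (R : realType) (d : nat) : set 'rV[R]_d := [set xi | l1 xi <= 1].
Definition intU (R : realType) (d : nat) : set 'rV[R]_d := [set xi | l1 xi < 1].

Definition radial_ext (R : realType) (d : nat) (g : 'rV[R]_d -> R)
    (xi : 'rV[R]_d) : \bar R :=
  if l1 xi < 1 then (g xi)%:E
  else lim ((fun s : R => (g (s *: xi))%:E) @ at_left 1).

Definition convex_on_U (R : realType) (d : nat) (f : 'rV[R]_d -> \bar R) : Prop :=
  forall (xi zeta : 'rV[R]_d) (lam : R), Uball xi -> Uball zeta ->
    0 <= lam <= 1 ->
    (f (lam *: xi + (1 - lam) *: zeta)%R <= lam%:E * f xi + (1 - lam)%:E * f zeta)%E.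

Definition lsc_on_U (R : realType) (d : nat) (f : 'rV[R]_d -> \bar R) : Prop :=
  forall (xi : 'rV[R]_d) (a : R), Uball xi -> (a%:E < f xi)%E ->
    exists2 V, nbhs xi V & forall zeta, V zeta -> Uball zeta -> (a%:E < f zeta)%E.

From HB Require Import structures.
From mathcomp Require Import all_boot all_order all_algebra.
From mathcomp Require Import all_classical all_reals all_analysis.
From mathcomp Require Import ess_sup_inf measurable_realfun ring lra zify.
Import Order.TTheory GRing.Theory Num.Def Num.Theory.
Import numFieldNormedType.Exports.
Local Open Scope classical_set_scope.
Local Open Scope ring_scope.
Set Implicit Arguments. Unset Strict Implicit. Unset Printing Implicit Defensive.

(* Along a ray
   s |-> f (s xi), convexity makes the chord slopes (f (s xi) - f 0) / s
   nondecreasing, so the radial limit exists in (-oo, +oo] and dominates every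
   chord value f 0 + (f (s xi) - f 0) / s.  Convexity passes to the limit, and
   since a chord value is continuous in xi and approaches the radial limit as
   s -> 1, the extension is lower semicontinuous.  For the ranges: a.s. every
   edge weight is at least r0 (the weights are identically distributed and
   there are countably many edges), so an n-step passage time is at least
   n r0, or n (r0 /\ 0) when zero steps are allowed; reading the shape limit
   along explicit lattice paths of length ~ n ending near n xi gives
   g >= r0 and g^o >= r0 /\ 0 on the open ball, and the bounds pass to the
   radial limits. *)

Section l1_ball.
Context {R : realType} {d : nat}.
Implicit Types (x y : 'rV[R]_d) (c s : R).

Lemma l1_ge0 x : 0 <= l1 x.
Proof. exact: sumr_ge0. Qed.

Lemma l10 : l1 (0 : 'rV[R]_d) = 0.
Proof. by rewrite /l1 big1 // => i _; rewrite mxE normr0. Qed.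

Lemma l1Z c x : l1 (c *: x) = `|c| * l1 x.
Proof. by rewrite /l1 mulr_sumr; apply: eq_bigr => i _; rewrite mxE normrM. Qed.

Lemma ler_l1D x y : l1 (x + y) <= l1 x + l1 y.
Proof. by rewrite /l1 -big_split; apply: ler_sum => i _; rewrite mxE ler_normD. Qed.

Lemma continuous_l1 : continuous (@l1 R d).
Proof.
move=> x; apply: (@cvg_big R 'I_d +%R 0 xpredT add_continuous _ (nbhs x)) => i _.
apply: (@continuous_comp _ _ _ (fun y : 'rV[R]_d => y 0 i) normr).
  exact: coord_continuous.
exact: norm_continuous.
Qed.

Lemma open_intU : open (@intU R d).
Proof.
have -> : @intU R d = @l1 R d @^-1` [set r | r < 1] by [].
by apply: open_comp => [x _|]; [exact: continuous_l1 | exact: open_lt].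
Qed.

Lemma intU0 : intU (0 : 'rV[R]_d).
Proof. by rewrite /intU /= l10. Qed.

Lemma intUZ x s : Uball x -> `|s| < 1 -> intU (s *: x).
Proof.
rewrite /Uball /intU /= l1Z => x1 s1.
by apply: le_lt_trans s1; rewrite ler_piMr.
Qed.

Lemma Uball_conv x y lam : Uball x -> Uball y -> 0 <= lam <= 1 ->
  Uball (lam *: x + (1 - lam) *: y).
Proof.
rewrite /Uball /= => x1 y1 /andP[lam0 lam1].
apply: le_trans (ler_l1D _ _) _; rewrite !l1Z ger0_norm // ger0_norm ?subr_ge0 //.
have := l1_ge0 x; have := l1_ge0 y; nra.
Qed.

End l1_ball.

Lemma EFin_cvg {R : realType} {T : Type} (F : set_system T) (FF : Filter F)
    (u : T -> R) (l : R) :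
  u @ F --> l -> (u x)%:E @[x --> F] --> l%:E.
Proof. by move=> ul; apply: cvg_EFin => //; exact: nearW. Qed.

Section radial_extension.
Context {R : realType} {d : nat} (f : 'rV[R]_d -> R).
Hypothesis f_cont : {within @intU R d, continuous f}.
Hypothesis f_convex : forall x y (lam : R), intU x -> intU y -> 0 <= lam <= 1 ->
  f (lam *: x + (1 - lam) *: y) <= lam * f x + (1 - lam) * f y.
Implicit Types (x y : 'rV[R]_d) (s : R).

Lemma continuous_intU x : intU x -> {for x, continuous f}.
Proof.
move: f_cont; rewrite continuous_open_subspace; last exact: open_intU.
by move=> f_cont' Ux; apply: f_cont'; rewrite inE.
Qed.

Definition origin_slope x s := (f (s *: x) - f 0) / s.

Lemma radialE x s : s != 0 -> f (s *: x) = f 0 + s * origin_slope x s.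
Proof. by move=> s0; rewrite /origin_slope; field. Qed.

Lemma origin_slope_le x s s' : Uball x -> 0 < s -> s <= s' -> s' < 1 ->
  origin_slope x s <= origin_slope x s'.
Proof.
move=> x1 s0 ss' s'1; have s'0 : 0 < s' := lt_le_trans s0 ss'.
have Us' : intU (s' *: x) by apply: intUZ x1 _; rewrite ger0_norm ?ltW.
have lam01 : 0 <= s / s' <= 1.
  by apply/andP; split; [rewrite divr_ge0 ?ltW | rewrite ler_pdivrMr ?mul1r].
have := f_convex Us' intU0 lam01.
rewrite scaler0 addr0 scalerA divfK ?gt_eqF // => cvx.
have chord : f (s *: x) - f 0 <= s / s' * (f (s' *: x) - f 0).
  suff -> : s / s' * (f (s' *: x) - f 0) =
    s / s' * f (s' *: x) + (1 - s / s') * f 0 - f 0 by lra.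
  by ring.
rewrite /origin_slope ler_pdivrMr //; apply: le_trans chord _.
by rewrite le_eqVlt; apply/orP; left; apply/eqP; ring.
Qed.

Lemma cvg_radial_intU x : intU x -> f (s *: x) @[s --> 1^'-] --> f x.
Proof.
move=> Ux; have scale_cvg : s *: x @[s --> 1^'-] --> 1 *: x.
  exact: cvgZr_tmp (cvg_at_left_filter cvg_id).
by rewrite scale1r in scale_cvg; exact: cvg_comp scale_cvg (continuous_intU Ux).
Qed.

Lemma is_cvg_radial_bounded x M : Uball x ->
  (forall s, 0 < s < 1 -> origin_slope x s <= M) ->
  cvg ((f (s *: x))%:E @[s --> 1^'-]).
Proof.
move=> x1 slopeM.
have slope_cvg : cvg (origin_slope x s @[s --> 1^'-]).
  apply: nondecreasing_at_left_is_cvgr; near=> y.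
    move=> a b; rewrite !in_itv /= => /andP[ya a1] /andP[_ b1] ab.
    apply: origin_slope_le => //; apply: lt_trans ya; near: y.
    exact: nbhs_left_gt.
  exists M => _ [s /= ys1 <-]; move: ys1; rewrite in_itv /= => /andP[ys s1].
  apply: slopeM.
  rewrite s1 andbT; apply: lt_trans ys; near: y; exact: nbhs_left_gt.
apply/cvg_ex; exists (f 0 + 1 * lim (origin_slope x s @[s --> 1^'-]))%:E.
apply: EFin_cvg; apply: (@cvg_trans _ ((f 0 + s * origin_slope x s) @[s --> 1^'-])).
  apply: near_eq_cvg; near=> s.
  have s0 : 0 < s by near: s; exact: nbhs_left_gt.
  by rewrite radialE ?gt_eqF.
apply: cvgD; first exact: cvg_cst.
by apply: cvgM => //; exact: cvg_at_left_filter cvg_id.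
Unshelve. all: by end_near.
Qed.

Lemma cvgey_radial_unbounded x : Uball x ->
  (forall M, exists2 s, 0 < s < 1 & M < origin_slope x s) ->
  (f (s *: x))%:E @[s --> 1^'-] --> +oo%E.
Proof.
move=> x1 slope_unbounded; apply/cvgeyPge => A.
have [s1 /andP[s10 s11] slope_s1] := slope_unbounded (2 * (`|A| + `|f 0|)).
near=> s.
have s1s : s1 < s by near: s; exact: nbhs_left_gt.
have s_half : 1 / 2 < s by near: s; apply: nbhs_left_gt; lra.
have s_lt1 : s < 1 by near: s; exact: nbhs_left_lt.
have slope_s := lt_le_trans slope_s1 (origin_slope_le x1 s10 (ltW s1s) s_lt1).
rewrite lee_fin radialE ?gt_eqF; last lra.
have : `|A| + `|f 0| <= s * origin_slope x s.
  have := normr_ge0 A; have := normr_ge0 (f 0); nra.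
have := ler_norm A; have := ler_norm (- f 0); rewrite normrN; lra.
Unshelve. all: by end_near.
Qed.

Lemma is_cvg_radial x : Uball x -> cvg ((f (s *: x))%:E @[s --> 1^'-]).
Proof.
move=> x1; have [[M slopeM]|unbounded] :=
  pselect (exists M, forall s, 0 < s < 1 -> origin_slope x s <= M).
  exact: is_cvg_radial_bounded slopeM.
apply/cvg_ex; exists +oo%E; apply: cvgey_radial_unbounded => // M.
apply: contra_notP unbounded => /forall2NP noM; exists M => s s01.
by case: (noM s) => // /negP; rewrite -leNgt.
Qed.

Lemma cvg_radial_ext x : Uball x ->
  (f (s *: x))%:E @[s --> 1^'-] --> radial_ext f x.
Proof.
rewrite /radial_ext; case: ifP => [Ux _|_]; last exact: is_cvg_radial.
by apply: EFin_cvg; apply: cvg_radial_intU.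
Qed.

Lemma radial_ext_ge_chord x s : Uball x -> 0 < s < 1 ->
  ((f 0 + origin_slope x s)%:E <= radial_ext f x)%E.
Proof.
move=> x1 /andP[s0 s1].
have chord_cvg : (f 0 + r * origin_slope x s)%:E @[r --> 1^'-] -->
    (f 0 + 1 * origin_slope x s)%:E.
  apply: EFin_cvg; apply: cvgD; first exact: cvg_cst.
  exact: cvgMr_tmp (cvg_at_left_filter cvg_id).
rewrite -[X in (f 0 + X)%:E]mul1r; apply: lee_cvg_to chord_cvg (cvg_radial_ext x1) _.
near=> r; have sr : s < r by near: r; exact: nbhs_left_gt.
have r1 : r < 1 by near: r; exact: nbhs_left_lt.
rewrite lee_fin radialE ?gt_eqF; last lra.
by rewrite lerD2l ler_pM2l ?origin_slope_le //; lra.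
Unshelve. all: by end_near.
Qed.

Lemma radial_ext_ge c x : (forall y, intU y -> (c <= (f y)%:E)%E) -> Uball x ->
  (c <= radial_ext f x)%E.
Proof.
move=> c_le x1; apply: cvge_ge (cvg_radial_ext x1); near=> s; apply: c_le.
apply: intUZ x1 _; rewrite ger0_norm; first by near: s; exact: nbhs_left_lt.
by apply: ltW; near: s; exact: nbhs_left_gt.
Unshelve. all: by end_near.
Qed.

Lemma radial_ext_convex : convex_on_U (radial_ext f).
Proof.
move=> x y lam x1 y1 lam01; have /andP[lam0 lam1] := lam01.
have [->|lam_neq0] := eqVneq lam 0.
  by rewrite scale0r add0r subr0 scale1r mul0e add0e mul1e.
have [->|lam_neq1] := eqVneq lam 1.
  by rewrite scale1r subrr scale0r addr0 mul1e mul0e adde0.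
have lam_gt0 : (0 < lam%:E)%E by rewrite lte_fin lt_neqAle eq_sym lam_neq0.
have lamC_gt0 : (0 < (1 - lam)%:E)%E by rewrite lte_fin subr_gt0 lt_neqAle lam_neq1.
have neqNy z : Uball z -> radial_ext f z != -oo%E.
  move=> z1; rewrite -ltNye; apply: lt_le_trans (radial_ext_ge_chord (s := 1/2) z1 _).
    exact: ltNyr.
  lra.
move: (neqNy _ x1) (neqNy _ y1) (cvg_radial_ext x1) (cvg_radial_ext y1).
case: (radial_ext f x) => [a| |] //; case: (radial_ext f y) => [b| |] // _ _;
  rewrite ?gt0_muley // ?addye ?addey ?leey // => fx_cvg fy_cvg.
have comb_cvg : (lam%:E * (f (s *: x))%:E + (1 - lam)%:E * (f (s *: y))%:E)%E
    @[s --> 1^'-] --> (lam%:E * a%:E + (1 - lam)%:E * b%:E)%E.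
  by apply: cvgeD; [exact: fin_num_adde_defl | exact: cvgeZl | exact: cvgeZl].
apply: lee_cvg_to (cvg_radial_ext (Uball_conv x1 y1 lam01)) comb_cvg _.
near=> s; have s0 : 0 < s by near: s; exact: nbhs_left_gt.
have s1 : `|s| < 1 by rewrite ger0_norm ?ltW //; near: s; exact: nbhs_left_lt.
rewrite -!EFinM -EFinD lee_fin scalerDr !scalerA (mulrC s) (mulrC s) -!scalerA.
by apply: f_convex; [exact: intUZ x1 s1 | exact: intUZ y1 s1 | exact: lam01].
Unshelve. all: by end_near.
Qed.

Lemma radial_ext_lsc : lsc_on_U (radial_ext f).
Proof.
move=> x a x1 a_lt.
have [b ab b_lt] : exists2 b : R, a < b & (b%:E < radial_ext f x)%E.
  move: a_lt; case: (radial_ext f x) => [r| |] // ar.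
    by exists ((a + r) / 2); rewrite !lte_fin in ar *; lra.
  by exists (a + 1); [lra | exact: ltry].
have near_b : \forall s \near 1^'-, (b%:E < (f (s *: x))%:E)%E.
  move: (cvg_radial_ext x1) => /(_ [set y | (b%:E < y)%E]); apply.
  apply: open_nbhs_nbhs; split => //.
  exact: open_ereal_gt_ereal.
have near_a : \forall s \near 1^'-, s * (a - f 0) < b - f 0.
  have lin_cvg : s * (a - f 0) @[s --> 1^'-] --> 1 * (a - f 0).
    exact: cvgMr_tmp (cvg_at_left_filter cvg_id).
  by apply: cvgr_lt lin_cvg _ _; lra.
near (1 : R)^'- => s.
have s0 : 0 < s by near: s; exact: nbhs_left_gt.
have s1 : s < 1 by near: s; exact: nbhs_left_lt.
have chord_gt : a < f 0 + origin_slope x s.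
  have fsx : b < f (s *: x) by rewrite -lte_fin; near: s.
  have sa : s * (a - f 0) < b - f 0 by near: s.
  rewrite -ltrBlDl /origin_slope ltr_pdivlMr // mulrC; lra.
have chord_cont : (f 0 + origin_slope z s) @[z --> x] --> f 0 + origin_slope x s.
  have nbhs_filter : Filter (nbhs x) by exact: nbhs_pfilter.
  apply: cvgD; first exact: cvg_cst.
  apply: cvgMr_tmp; apply: cvgB; last exact: cvg_cst.
  apply: (cvg_comp (fun z => s *: z) f); first exact: cvgZl_tmp cvg_id.
  by apply: continuous_intU; apply: intUZ x1 _; rewrite ger0_norm ?ltW.
exists [set z | a < f 0 + origin_slope z s]; first exact: cvgr_gt chord_cont _ chord_gt.
move=> z /= az z1; apply: lt_le_trans (radial_ext_ge_chord (s := s) z1 _).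
  by rewrite lte_fin.
by rewrite s0 s1.
Unshelve. all: by end_near.
Qed.

End radial_extension.

Section lattice_paths.
Context {d : nat}.
Implicit Types (x : 'rV[int]_d) (p q : seq (step d)).

Lemma path_end_cat x p q : path_end x (p ++ q) = path_end (path_end x p) q.
Proof. by elim: p x => //= s p IHp x; rewrite IHp. Qed.

Lemma path_end_shift x p : path_end x p = x + path_end 0 p.
Proof.
elim: p x => /= [|s p IHp] x; first by rewrite addr0.
by rewrite IHp [in RHS]IHp add0r addrA.
Qed.

Lemma path_end_flatten (ps : seq (seq (step d))) :
  path_end 0 (flatten ps) = \sum_(p <- ps) path_end 0 p.
Proof.
elim: ps => [|p ps IHps] /=; first by rewrite big_nil.
by rewrite path_end_cat path_end_shift IHps big_cons.
Qed.

Lemma path_end_nseq n (s : step d) : path_end 0 (nseq n s) = n%:Z *: step_vec s.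
Proof.
elim: n => [|n IHn] /=; first by rewrite scale0r.
by rewrite path_end_shift IHn add0r intS scalerDl scale1r.
Qed.

Lemma step_vec_axis (i j : 'I_d) (b : bool) :
  step_vec (Some (i, ~~ b)) 0 j = (-1) ^+ b * (i == j)%:R.
Proof. by case: b; rewrite /= /unitv ?mxE /= (eq_sym j) ?mulN1r ?mul1r. Qed.

Lemma admissible_no_zero_step lazy p : None \notin p -> admissible lazy p.
Proof.
by move=> p_nz; apply/orP; right; apply/allP => s s_p; apply: contraNneq p_nz => <-.
Qed.

End lattice_paths.

Section approx_path.
Context {R : realType} {d : nat} (i0 : 'I_d) (zeta : 'rV[R]_d).

Definition axis_steps n j := truncn (n%:R * `|zeta 0 j|).

Definition axis_step j : step d := Some (j, ~~ (zeta 0 j < 0)).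

Definition padding_pairs n := ((n - \sum_(j < d) axis_steps n j)./2).+1.

(* Walk [axis_steps n j] unit steps along each axis [j] in the direction of
   [zeta 0 j], then go back and forth along [i0] to push the length just past [n]. *)
Definition approx_path n : seq (step d) :=
  flatten [seq nseq (axis_steps n j) (axis_step j) | j <- enum 'I_d] ++
  flatten (nseq (padding_pairs n) [:: Some (i0, true); Some (i0, false)]).

Lemma admissible_approx_path lazy n : admissible lazy (approx_path n).
Proof.
apply: admissible_no_zero_step; rewrite mem_cat negb_or; apply/andP; split.
  by apply/flattenP => -[p /mapP[j _ ->]] /nseqP[].
by apply/flattenP => -[p /nseqP[-> _]]; rewrite !inE.
Qed.

Lemma size_approx_path n :
  size (approx_path n) = (\sum_(j < d) axis_steps n j + 2 * padding_pairs n)%N.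
Proof.
rewrite size_cat !size_flatten /shape -map_comp sumnE big_map big_enum /=.
rewrite map_nseq sumnE big_nseq iter_addn_0 /padding_pairs; congr (_ + _)%N.
  by apply: eq_bigr => j _; rewrite size_nseq.
rewrite /=; lia.
Qed.

Lemma approx_path_end n j :
  path_end 0 (approx_path n) 0 j = (axis_steps n j)%:Z * (-1) ^+ (zeta 0 j < 0)%R.
Proof.
rewrite path_end_cat path_end_shift [X in _ + X]path_end_flatten big1_seq ?addr0.
  rewrite path_end_flatten big_map big_enum /= summxE (bigD1 j) //= big1 ?addr0.
    by rewrite path_end_nseq mxE step_vec_axis eqxx mulr1.
  by move=> k kj; rewrite path_end_nseq mxE step_vec_axis (negbTE kj) !mulr0.
by move=> p /andP[_ /nseqP[-> _]] /=; rewrite add0r addrN.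
Qed.

Lemma sum_axis_steps_le n : l1 zeta <= 1 -> (\sum_(j < d) axis_steps n j <= n)%N.
Proof.
move=> zeta1; rewrite -(ler_nat R) natr_sum.
apply: le_trans (_ : \sum_(j < d) n%:R * `|zeta 0 j| <= _).
  by apply: ler_sum => j _; rewrite truncn_le mulr_ge0.
by rewrite -mulr_sumr -[leRHS]mulr1 ler_wpM2l.
Qed.

Lemma size_approx_path_bounds n : l1 zeta <= 1 ->
  (n < size (approx_path n) <= n + 2)%N.
Proof.
move=> /(sum_axis_steps_le n); rewrite size_approx_path /padding_pairs.
have := odd_double_half (n - \sum_(j < d) axis_steps n j); rewrite -mul2n.
case: odd => /=; lia.
Qed.

End approx_path.

Section real_sequences.
Context {R : realType}.

Lemma cvg_invn : (n%:R : R)^-1 @[n --> \oo] --> 0.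
Proof.
apply/gtr0_cvgV0; last exact: cvgr_idn.
by near=> n; rewrite ltr0n; near: n; exact: nbhs_infty_gt.
Unshelve. all: by end_near.
Qed.

Lemma cvg_truncn_scaled (y : R) : 0 <= y ->
  (n%:R^-1 * (truncn (n%:R * y))%:R) @[n --> \oo] --> y.
Proof.
move=> y0; apply: (@squeeze_cvgr _ _ _ _ (fun n => y - n%:R^-1) (fun _ => y)).
- near=> n; have n0 : (0 : R) < n%:R by rewrite ltr0n; near: n; exact: nbhs_infty_gt.
  have /andP[trunc_le trunc_gt] := truncn_itv (mulr_ge0 (ler0n R n) y0).
  rewrite ler_pdivlMl // ler_pdivrMl // mulrBr mulfV ?gt_eqF // trunc_le andbT.
  by move: trunc_gt; rewrite -natr1; lra.
- by rewrite -[X in _ --> X]subr0; apply: cvgB; [exact: cvg_cst | exact: cvg_invn].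
- exact: cvg_cst.
Unshelve. all: by end_near.
Qed.

Lemma cvg_ratio_bounded_shift (k : nat -> nat) c : (forall n, n <= k n <= n + c)%N ->
  ((k n)%:R / n%:R : R) @[n --> \oo] --> (1 : R).
Proof.
move=> k_bounds.
apply: (@squeeze_cvgr _ _ _ _ (fun _ => 1 : R) (fun n => 1 + c%:R * n%:R^-1)).
- near=> n; have n0 : (0 : R) < n%:R by rewrite ltr0n; near: n; exact: nbhs_infty_gt.
  have /andP[k_ge k_le] := k_bounds n.
  rewrite ler_pdivlMr // mul1r ler_nat k_ge ler_pdivrMr // mulrDl mul1r.
  by rewrite -mulrA mulVf ?gt_eqF // mulr1 -natrD ler_nat.
- exact: cvg_cst.
- rewrite -[X in _ --> X]addr0 -(mulr0 c%:R).
  by apply: cvgD; [exact: cvg_cst | exact: cvgMl_tmp cvg_invn].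
Unshelve. all: by end_near.
Qed.

Lemma cvg_mx_entries {m n : nat} (u : nat -> 'M[R]_(m, n)) (M : 'M[R]_(m, n)) :
  (forall i j, u k i j @[k --> \oo] --> M i j) -> u @ \oo --> M.
Proof.
move=> u_cvg A [P P_nbhs sPA].
have : \forall k \near \oo, forall i j, P i j (u k i j).
  by apply: filter_forall => i; apply: filter_forall => j; exact: u_cvg.
by apply: filterS => k uk; apply: sPA.
Qed.

End real_sequences.

Section approx_path_limits.
Context {R : realType} {d : nat} (i0 : 'I_d) (zeta : 'rV[R]_d).

Lemma cvg_approx_path_end :
  (n%:R^-1 *: to_real R (path_end 0 (approx_path i0 zeta n))) @[n --> \oo] --> zeta.
Proof.
apply: cvg_mx_entries => i j; rewrite ord1 [X in _ --> X]numEsign mulrC.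
have -> : (fun n => (n%:R^-1 *: to_real R (path_end 0 (approx_path i0 zeta n))) 0 j) =
    (fun n => n%:R^-1 * (axis_steps zeta n j)%:R * (-1) ^+ (zeta 0 j < 0)%R).
  by apply/funext => n; rewrite !mxE approx_path_end intrM intr_sign mulrA.
exact: cvgMr_tmp (cvg_truncn_scaled (normr_ge0 _)).
Qed.

Hypothesis zeta1 : l1 zeta <= 1.

Lemma size_approx_path_cvgy : size (approx_path i0 zeta n) @[n --> \oo] --> \oo.
Proof.
apply/cvgnyPge => m; near=> n; apply: leq_trans (ltnW (_ : n < _)%N).
  by near: n; exact: nbhs_infty_ge.
by have /andP[] := size_approx_path_bounds i0 n zeta1.
Unshelve. all: by end_near.
Qed.

Lemma cvg_size_approx_path :
  ((size (approx_path i0 zeta n))%:R / n%:R : R) @[n --> \oo] --> (1 : R).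
Proof.
apply: (@cvg_ratio_bounded_shift _ _ 2) => n.
by have /andP[/ltnW -> ->] := size_approx_path_bounds i0 n zeta1.
Qed.

End approx_path_limits.

Section passage_lower_bound.
Context {R : realType} {d : nat} (lazy : bool) (tw : edge d -> R) (m : R).
Hypothesis tw_ge : forall e, m <= tw e.
(* Zero steps cost 0, so [m] bounds their weight only when [m <= 0]. *)
Hypothesis lazy_m_le0 : lazy -> m <= 0.

Lemma path_weight_ge x p : admissible lazy p -> (size p)%:R * m <= path_weight tw x p.
Proof.
elim: p x => [|s p IHp] x; first by rewrite mul0r.
rewrite /admissible /= => /orP adm.
have step_ge : m <= step_weight tw x s.
  case: s adm => [[i []]|] //= adm; case: adm => // lazy_true; exact: lazy_m_le0.
rewrite -addn1 natrD mulrDl mul1r addrC lerD // IHp //.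
by rewrite /admissible; case: adm => [-> | /andP[_ ->]]; rewrite ?orbT.
Qed.

Lemma passage_ge n x : ((n%:R * m)%:E <= passage lazy tw n x)%E.
Proof.
apply: le_bigmin => [|p /andP[adm _]]; first exact: leey.
by rewrite lee_fin -[n in n%:R](size_tuple p) path_weight_ge.
Qed.

End passage_lower_bound.

(* [shape_limit P t lazy g] is [{ae P, forall w, shape_limit_at lazy (t^~ w) g}]. *)
Definition shape_limit_at {R : realType} {d : nat} (lazy : bool) (tw : edge d -> R)
    (g : 'rV[R]_d -> R) : Prop :=
  forall (xi : 'rV[R]_d) (alpha : R) (k : nat -> nat) (x : nat -> 'rV[int]_d),
    l1 xi < alpha ->
    k @ \oo --> \oo ->
    (fun n => (k n)%:R / n%:R : R) @ \oo --> alpha ->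
    (forall n, reachable lazy (k n) (x n)) ->
    (fun n => n%:R^-1 *: to_real R (x n)) @ \oo --> xi ->
    (fun n => (n%:R^-1)%:E * passage lazy tw (k n) (x n))%E
      @ \oo --> (alpha * g (alpha^-1 *: xi))%:E.

(* Along [approx_path zeta], the time constant is [g zeta] (take alpha = 1),
   while each of the [~ n] steps costs at least [m]. *)
Lemma shape_ge_weight_lb {R : realType} {d : nat} (i0 : 'I_d) (lazy : bool)
    (tw : edge d -> R) (m : R) (g : 'rV[R]_d -> R) :
  (forall e, m <= tw e) -> (lazy -> m <= 0) -> shape_limit_at lazy tw g ->
  forall zeta, intU zeta -> m <= g zeta.
Proof.
move=> tw_ge lazy_m_le0 g_shape zeta zeta1.
pose k n := size (approx_path i0 zeta n).
have reach n : reachable lazy (k n) (path_end 0 (approx_path i0 zeta n)).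
  by exists (in_tuple (approx_path i0 zeta n)); rewrite admissible_approx_path.
have := g_shape zeta 1 k _ zeta1 (size_approx_path_cvgy i0 (ltW zeta1))
  (cvg_size_approx_path i0 (ltW zeta1)) reach (cvg_approx_path_end i0 (zeta := zeta)).
rewrite invr1 scale1r mul1r => passage_cvg.
have lb_cvg : (((k n)%:R / n%:R) * m)%:E @[n --> \oo] --> (1 * m)%:E.
  by apply: EFin_cvg; apply: cvgMr_tmp; exact: cvg_size_approx_path (ltW zeta1).
rewrite -lee_fin -[m in m%:E]mul1r; apply: lee_cvg_to lb_cvg passage_cvg _.
near=> n; rewrite mulrAC mulrC EFinM; apply: lee_wpmul2l; first by rewrite lee_fin invr_ge0.
exact: passage_ge.
Unshelve. all: by end_near.
Qed.

Lemma ae_forall_countable {d} {T : sigmaRingType d} {R : realType}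
    (mu : {measure set T -> \bar R}) (I : countType) (Q : I -> T -> Prop) :
  (forall i, \forall w \ae mu, Q i w) -> \forall w \ae mu, forall i, Q i w.
Proof.
move=> Q_ae; pose Qn n w := if unpickle n is Some i then Q i w else True.
have : \forall w \ae mu, forall n, Qn n w.
  by apply: ae_foralln => n; rewrite /Qn; case: unpickle => [i|]; [exact: Q_ae | exact: aeW].
by apply: filterS => w Qw i; have := Qw (pickle i); rewrite /Qn pickleK.
Qed.

Lemma measurable_EFin_lt {R : realType} (c : \bar R) : measurable [set y : R | (y%:E < c)%E].
Proof.
rewrite (_ : [set y : R | (y%:E < c)%E] = EFin @^-1` `]-oo, c[).
  by rewrite -[X in measurable X]setTI; exact: EFin_measurable measurableT _ (emeasurable_itv _).
by apply/seteqP; split => y /=; rewrite in_itv.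
Qed.

Section same_law.
Context {dT : measure_display} {T : measurableType dT} {R : realType}.
Context (mu : {measure set T -> \bar R}) (X Y : T -> R).
Hypotheses (mX : measurable_fun setT X) (mY : measurable_fun setT Y).
Hypothesis same_law : forall B, measurable B -> mu (X @^-1` B) = mu (Y @^-1` B).

Lemma ae_ge_same_law (c : \bar R) :
  (\forall w \ae mu, (c <= (X w)%:E)%E) -> \forall w \ae mu, (c <= (Y w)%:E)%E.
Proof.
move=> X_ge; have mB := measurable_EFin_lt c.
have mpre (Z : T -> R) : measurable_fun setT Z -> measurable (Z @^-1` [set y | (y%:E < c)%E]).
  by move=> mZ; rewrite -[X in measurable X]setTI; exact: mZ.
apply: (negligibleS (A := Y @^-1` [set y | (y%:E < c)%E])).
  by move=> w /= Yw; rewrite ltNge; apply/negP.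
apply/negligibleP; first exact: mpre.
apply: (etrans (esym (same_law mB))); apply/negligibleP; first exact: mpre.
by apply: (negligibleS _ X_ge) => w /= Xw; apply/negP; rewrite -ltNge.
Qed.

End same_law.

Lemma ae_weights_ge_ess_inf {R : realType} {dT : measure_display} {T : measurableType dT}
    (P : probability T R) {d : nat} (t : edge d -> T -> R) (e0 : edge d) :
  iid_weights P t -> \forall w \ae P, forall e, (ess_inf P (EFin \o t e0) <= (t e w)%:E)%E.
Proof.
move=> [t_meas [t_law _]]; apply: ae_forall_countable => e.
apply: (ae_ge_same_law (t_meas e0) (t_meas e) (t_law e0 e)).
exact: (ess_inf_le P (EFin \o t e0)).
Qed.

Unset Implicit Arguments.

Theorem theorem2p10 (R : realType) (dT : measure_display) (T : measurableType dT)
    (P : probability T R) (d : nat) (t : edge d -> T -> R) (e0 : edge d)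
    (g go : 'rV[R]_d -> R) :
  (2 <= d)%N ->
  iid_weights P t ->
  (* r_0 = ess inf t(e) > -oo *)
  (-oo < ess_inf P (EFin \o t e0))%E ->
  (* E[(min{t_1^+, ..., t_{2d}^+})^d] < oo, the t_i being the i.i.d.
     weights of the 2d edges at the origin *)
  (\int[P]_w ((\big[Order.min/+oo]_(e <- origin_edges d)
                  (Num.max (t e w) 0)%:E) ^+ d) < +oo)%E ->
  (* g, g^o : the continuous convex shape functions on int U *)
  {within @intU R d, continuous g} -> {within @intU R d, continuous go} ->
  (forall xi zeta (lam : R), intU xi -> intU zeta -> 0 <= lam <= 1 ->
     g (lam *: xi + (1 - lam) *: zeta) <= lam * g xi + (1 - lam) * g zeta) ->
  (forall xi zeta (lam : R), intU xi -> intU zeta -> 0 <= lam <= 1 ->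
     go (lam *: xi + (1 - lam) *: zeta) <= lam * go xi + (1 - lam) * go zeta) ->
  shape_limit P t false g ->
  shape_limit P t true go ->
  (* the radial limits exist on the boundary |xi|_1 = 1 *)
  (forall xi : 'rV[R]_d, l1 xi = 1 ->
     cvg ((fun s : R => (g (s *: xi))%:E) @ at_left 1) /\
     cvg ((fun s : R => (go (s *: xi))%:E) @ at_left 1)) /\
  (* ranges: g : U -> [r0, oo], g^o : U -> [r0 /\ 0, oo] *)
  (forall xi, Uball xi ->
     (ess_inf P (EFin \o t e0) <= radial_ext g xi)%E /\
     (Order.min (ess_inf P (EFin \o t e0)) 0%:E <= radial_ext go xi)%E) /\
  (* convexity and lower semicontinuity on U *)
  convex_on_U (radial_ext g) /\ lsc_on_U (radial_ext g) /\
  convex_on_U (radial_ext go) /\ lsc_on_U (radial_ext go).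
Proof.
(* The moment condition is what makes [g] and [g^o] exist; here they are given. *)
move=> d_ge2 iid r0_gtNy _ g_cont go_cont g_convex go_convex g_shape go_shape.
split.
  by move=> xi xi1; split; apply: is_cvg_radial => //; rewrite /Uball /= xi1.
split; last first.
  by do !split; solve [exact: radial_ext_convex | exact: radial_ext_lsc].
set r0 := ess_inf P (EFin \o t e0).
have P_gt0 : (0 < P setT)%E by rewrite probability_setT lte01.
have P_proper := ae_properfilter_algebraOfSetsType P_gt0.
have [w [w_ge [g_w go_w]]] :=
  filter_ex (filterI (ae_weights_ge_ess_inf e0 iid) (filterI g_shape go_shape)).
have [r r0E] : exists r : R, r0 = r%:E.
  exists (fine r0); rewrite fineK // fin_numE -ltNye r0_gtNy /=.
  by rewrite -ltey (le_lt_trans (w_ge e0)) ?ltry.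
have tw_ge e : r <= t e w by rewrite -lee_fin -r0E.
have i0 : 'I_d := Ordinal (ltnW d_ge2).
move=> xi xi1; rewrite r0E -EFin_min; split; apply: radial_ext_ge => // y y1; rewrite lee_fin.
  by apply: (shape_ge_weight_lb i0 (tw := fun e => t e w) tw_ge _ g_w).
apply: (shape_ge_weight_lb i0 (tw := fun e => t e w) _ _ go_w y1) => [e|_].
  by rewrite ge_min tw_ge.
by rewrite ge_min lexx orbT.
Qed.
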